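(* In the setting of the context, let $\Lambda:B\to B'$ be a CPTP map, and for a Choi matrix $J$ (of a channel $\mathcal{E}:A'\to B$) let $J'=(\mathrm{id}_{A'}\otimes\Lambda)(J)$ be the Choi matrix of $\Lambda\circ\mathcal{E}$, and define $\sigma^{g}_{J'},\sigma^{t}_{J'}$ on $AB'$ by the same formulas as $\rho^g_J,\rho^t_J$ with $J'$ in place of $J$. Assume: (a) there is a POVM $\{P'_c\}_{c\in\mathcal{C}'}$ on $AB'$ with $\Phi'_c[\sigma]=\operatorname{Tr}(P'_c\sigma)$ such that $\Phi'_c[(\mathrm{id}_A\otimes\Lambda)(\rho)]=\Phi_c[\rho]$ for all $c$ and all states $\rho$ on $AB$; (b) there are constants $\theta_1,\theta_2$, a subset $\mathcal{F}\subseteq\mathcal{C}'$, a POVM element $M^A$ on $A$ and projectors $\Pi^B$ on $B$, $\Pi^{B'}$ on $B'$ with $\operatorname{Tr}[(M^A\otimes\Pi^{B'})(\mathrm{id}_A\otimes\Lambda)(\rho)]=\operatorname{Tr}[(M^A\otimes\Pi^{B})\rho]$ for all $\rho$, such that $\sum_{c\in\mathcal{F}}\Phi_c[\rho]\ge\theta_1\big(\theta_2-\operatorname{Tr}[(M^A\otimes\Pi^B)\rho]\big)$ for all states $\rho$ on $AB$; (c) $\hat W$ is a real function on states of $AB'$ with $\hat W(\sigma^g_{J'})\le W(\rho^g_J)$ for every Choi matrix $J$. Then for every $\mathbf{g}\in\mathbb{R}^{|\mathcal{C}'|}$, every probability distribution $\mathbf{q}^{\mathrm{hon}}$ on $\mathcal{C}'$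 and every $\alpha\in(1,3/2)$, $$\inf_{J}\Big(W(\rho^{g}_J)+\mathbf{g}\cdot(\mathbf{q}^{\mathrm{hon}}-\boldsymbol\Phi[\rho^t_J])-c_\alpha\widetilde V(\boldsymbol\Phi[\rho^t_J],\mathbf{g})\Big)\ \ge\ \inf_{J'\in\mathcal{D}'}\Big(\hat W(\sigma^{g}_{J'})+\mathbf{g}\cdot(\mathbf{q}^{\mathrm{hon}}-\boldsymbol\Phi'[\sigma^t_{J'}])-c_\alpha\widetilde V(\boldsymbol\Phi'[\sigma^t_{J'}],\mathbf{g})\Big),$$ where the left infimum is over all Choi matrices $J$ on $A'B$, $c_\alpha=\frac{\alpha-1}{2-\alpha}\frac{\ln 2}{2}$, and $$\mathcal{D}'=\Big\{J'\ge0 \text{ on } A'B' : \operatorname{Tr}_{B'}J'=\mathbb{1}_{A'},\ \sum_{c\in\mathcal{F}}\Phi'_c[\sigma^t_{J'}]\ge\theta_1\big(\theta_2-\operatorname{Tr}[(M^A\otimes\Pi^{B'})\sigma^t_{J'}]\big)\Big\}.$$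
   Context: $A,A',B,B'$ are finite-dimensional systems, $\ket{\xi^g},\ket{\xi^t}$ pure states on $AA'$. A Choi matrix is $J\ge0$ on $A'B$ with $\operatorname{Tr}_B J=\mathbb{1}_{A'}$, and $\rho^{g}_J=\operatorname{Tr}_{A'}[(\mathbb{1}_A\otimes J)(\ket{\xi^g}\!\bra{\xi^g}^{T_{A'}}\otimes\mathbb{1}_B)]$, $\rho^{t}_J$ likewise with $\xi^t$. $W$ is a real-valued function of states on $AB$; $\mathcal{C}'$ is a finite alphabet, $\Phi_c[\rho]=\operatorname{Tr}(P_c\rho)$ for a POVM $\{P_c\}_{c\in\mathcal{C}'}$ on $AB$, $\boldsymbol\Phi=(\Phi_c)_c$. Given $\gamma\in(0,1]$, an integer $d_A\ge1$ and $\kappa\in\{1,2\}$, for a distribution $\mathbf{q}$ on $\mathcal{C}'$ and $\mathbf{g}\in\mathbb{R}^{|\mathcal{C}'|}$, $$\widetilde V(\mathbf{q},\mathbf{g})=\Big(\log_2(1+2d_A^\kappa)+\sqrt{2+\sum_{c}\tfrac{q_c}{\gamma}(\max(\mathbf{g})-g_c)^2-(\max(\mathbf{g})-\mathbf{g}\cdot\mathbf{q})^2}\Big)^2.$$ *)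

From HB Require Import structures.
From mathcomp Require Import all_boot all_order all_algebra.
From mathcomp Require Import complex mxtens.
From mathcomp Require Import boolp classical_sets reals constructive_ereal ereal exp.

Set Implicit Arguments.
Unset Strict Implicit.
Unset Printing Implicit Defensive.

Import Order.TTheory GRing.Theory Num.Theory.
Local Open Scope ring_scope.

Section QDefs.
Variable R : realType.
Local Notation C := R[i].

Definition adjmx {m n} (A : 'M[C]_(m, n)) : 'M[C]_(n, m) :=
  (map_mx (fun x : C => x^*) A)^T.

(* positive semidefinite: <v, A v> >= 0 for all v (in a numClosedField,
   0 <= z means z is real and nonnegative) *)
Definition psd {n} (A : 'M[C]_n) : Prop :=
  forall v : 'cV[C]_n, 0 <= (adjmx v *m A *m v) 0 0.

Definition is_state {n} (rho : 'M[C]_n) : Prop := psd rho /\ \tr rho = 1.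

Definition unit_vec {n} (v : 'cV[C]_n) : Prop := (adjmx v *m v) 0 0 = 1.
Definition ketbra {n} (v : 'cV[C]_n) : 'M[C]_n := v *m adjmx v.

Definition povm {n} {I : finType} (P : I -> 'M[C]_n) : Prop :=
  (forall c, psd (P c)) /\ \sum_c P c = 1%:M.
Definition povm_elem {n} (M : 'M[C]_n) : Prop := psd M /\ psd (1%:M - M).
Definition projector {n} (P : 'M[C]_n) : Prop := P *m P = P /\ adjmx P = P.

(* Bipartite index conventions: index (i,j) of X (x) Y is mxtens_index (i,j),
   consistent with the Kronecker product  A *t B  of mxtens. *)
Local Notation idx i j := (mxtens_index (i, j)).
Local Notation un k := (mxtens_unindex k).

Definition ptr2 {m n} (M : 'M[C]_(m * n)) : 'M[C]_m :=
  \matrix_(i, i') \sum_(j < n) M (idx i j) (idx i' j).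

Definition ptransp2 {m n} (M : 'M[C]_(m * n)) : 'M[C]_(m * n) :=
  \matrix_(k, k') M (idx (un k).1 (un k').2) (idx (un k').1 (un k).2).

Definition ptr_mid {m n p} (M : 'M[C]_(m * (n * p))) : 'M[C]_(m * p) :=
  \matrix_(k, k') \sum_(j < n)
     M (idx (un k).1 (idx j (un k).2)) (idx (un k').1 (idx j (un k').2)).

Definition is_choi {a' b} (J : 'M[C]_(a' * b)) : Prop :=
  psd J /\ ptr2 J = 1%:M.

(* rho_J = Tr_{A'}[(1_A (x) J)(|xi><xi|^{T_{A'}} (x) 1_B)] on AB *)
Definition choi_state {a a' b} (xi : 'cV[C]_(a * a')) (J : 'M[C]_(a' * b))
  : 'M[C]_(a * b) :=
  ptr_mid ((1%:M : 'M[C]_a) *t J *m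
     castmx (esym (mulnA a a' b), esym (mulnA a a' b))
            (ptransp2 (ketbra xi) *t (1%:M : 'M[C]_b))).

(* (id_n (x) L)(M) for a map L : M_b -> M_b' (acting blockwise) *)
Definition idtens {n b b'} (L : 'M[C]_b -> 'M[C]_b') (M : 'M[C]_(n * b))
  : 'M[C]_(n * b') :=
  \matrix_(k, k') L (\matrix_(x, y) M (idx (un k).1 x) (idx (un k').1 y))
                    (un k).2 (un k').2.

Definition cptp {b b'} (L : 'M[C]_b -> 'M[C]_b') : Prop :=
  [/\ (forall (c : C) X Y, L (c *: X + Y) = c *: L X + L Y),
      (forall n (M : 'M[C]_(n * b)), psd M -> psd (idtens L M))
    & (forall X, \tr (L X) = \tr X)].

(* Phi_c[rho] = Tr(P_c rho) (real part; it is real on states) *)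
Definition Phi {n} {I : finType} (P : I -> 'M[C]_n) (rho : 'M[C]_n) (c : I)
  : R := complex.Re (\tr (P c *m rho)).

Definition prob_dist {I : finType} (q : I -> R) : Prop :=
  (forall c, 0 <= q c) /\ \sum_c q c = 1.

Definition log2 (x : R) : R := ln x / ln 2.

Definition maxv {I : finType} (g : I -> R) : R :=
  fine (\big[Order.max/-oo%E]_(c : I) ((g c)%:E)).

Definition dotv {I : finType} (g q : I -> R) : R := \sum_c g c * q c.

Definition Vtilde (gamma : R) (dA kappa : nat) {I : finType} (q g : I -> R)
  : R :=
  (log2 (1 + 2 * (dA%:R) ^+ kappa) +
   Num.sqrt (2 + \sum_c (q c / gamma) * (maxv g - g c) ^+ 2
               - (maxv g - dotv g q) ^+ 2)) ^+ 2.

Definition c_alpha (alpha : R) : R := (alpha - 1) / (2 - alpha) * (ln 2 / 2).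

End QDefs.

From HB Require Import structures.
From mathcomp Require Import all_boot all_order all_algebra.
From mathcomp Require Import complex mxtens.
From mathcomp Require Import boolp classical_sets reals constructive_ereal ereal exp.

Set Implicit Arguments.
Unset Strict Implicit.
Unset Printing Implicit Defensive.

Import Order.TTheory GRing.Theory Num.Theory.
Local Open Scope ring_scope.
Local Open Scope classical_set_scope.

(* The map J |-> rho_J is the congruence rho_J = (X ⊗ 1) J (X† ⊗ 1), where
   X is the a x a' matrix obtained by reshaping |xi>.  Hence it commutes with
   id ⊗ Λ: the Choi matrix J' = (id ⊗ Λ)(J) satisfies
   sigma_J' = (id_A ⊗ Λ)(rho_J), and rho_J is a state.  Hypotheses (a)-(c)
   then say that J' lies in D' with objective value at most that of J, so the
   infimum over D' is at most the infimum over all Choi matrices. *)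

Local Notation idx i j := (mxtens_index (i, j)).

Lemma sum_mxtens_index (V : nmodType) m n (F : 'I_(m * n) -> V) :
  \sum_k F k = \sum_(i < m) \sum_(j < n) F (idx i j).
Proof.
rewrite pair_big /=; apply: reindex.
exists (@mxtens_unindex m n) => k _.
  by case: k => i j; rewrite mxtens_indexK.
by rewrite mxtens_unindexK.
Qed.

Lemma sum_delta_mull (K : pzSemiRingType) n (i : 'I_n) (f : 'I_n -> K) :
  \sum_j (i == j)%:R * f j = f i.
Proof.
rewrite (bigD1 i) //= eqxx mul1r big1 ?addr0 // => j.
by rewrite eq_sym => /negbTE ->; rewrite mul0r.
Qed.

Lemma sum_delta_mulr (K : pzSemiRingType) n (i : 'I_n) (f : 'I_n -> K) :
  \sum_j f j * (j == i)%:R = f i.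
Proof.
rewrite (bigD1 i) //= eqxx mulr1 big1 ?addr0 // => j /negbTE ->.
by rewrite mulr0.
Qed.

Lemma tens1mx_mulmxE (K : comPzRingType) m m' n p p' (A : 'M[K]_(m, m'))
    (M : 'M[K]_(m' * n, p' * n)) (B : 'M[K]_(p', p)) i y i' y' :
  ((A *t 1%:M) *m M *m (B *t 1%:M)) (idx i y) (idx i' y') =
  \sum_(j < m') \sum_(j' < p') A i j * M (idx j y) (idx j' y') * B j' i'.
Proof.
rewrite mxE sum_mxtens_index [RHS]exchange_big; apply: eq_bigr => j' _ /=.
under eq_bigr => z _ do rewrite tensmxE [1%:M _ _]mxE mulrA.
rewrite sum_delta_mulr mxE sum_mxtens_index mulr_suml; apply: eq_bigr => j _.
under eq_bigr => z _ do rewrite tensmxE [1%:M _ _]mxE mulrAC mulrC.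
by rewrite sum_delta_mull.
Qed.

Lemma cast_mxtens_indexA m n p (e : (m * (n * p) = m * n * p)%N) i j k :
  cast_ord e (idx i (idx j k)) = idx (idx i j) k.
Proof. by apply: val_inj; rewrite /= mulnDl -mulnA addnA. Qed.

Section ChoiState.
Variable R : realType.
Local Notation C := R[i].

Lemma adjmxM m n p (A : 'M[C]_(m, n)) (B : 'M[C]_(n, p)) :
  adjmx (A *m B) = adjmx B *m adjmx A.
Proof. by rewrite /adjmx map_mxM trmx_mul. Qed.

Lemma adjmx_tens m n p q (A : 'M[C]_(m, n)) (B : 'M[C]_(p, q)) :
  adjmx (A *t B) = adjmx A *t adjmx B.
Proof. by rewrite /adjmx (map_mxT Num.Def.conjC) trmx_tens. Qed.

Lemma adjmxK m n (A : 'M[C]_(m, n)) : adjmx (adjmx A) = A.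
Proof. by apply/matrixP => i j; rewrite !mxE conjCK. Qed.

Lemma adjmx1 n : adjmx (1%:M : 'M[C]_n) = 1%:M.
Proof. by apply/matrixP => i j; rewrite !mxE eq_sym rmorph_nat. Qed.

Lemma psd_congr m n (M : 'M[C]_m) (K : 'M[C]_(m, n)) :
  psd M -> psd (adjmx K *m M *m K).
Proof.
by move=> psdM v; rewrite -!mulmxA mulmxA -adjmxM mulmxA; apply: psdM.
Qed.

Lemma ketbraE n (v : 'cV[C]_n) k k' : ketbra v k k' = v k 0 * (v k' 0)^*.
Proof. by rewrite /ketbra /adjmx mxE big_ord1 !mxE. Qed.

Lemma ptransp2E m n (M : 'M[C]_(m * n)) i j i' j' :
  ptransp2 M (idx i j) (idx i' j') = M (idx i j') (idx i' j).
Proof. by rewrite mxE !mxtens_indexK. Qed.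

Definition ket_mx m n (xi : 'cV[C]_(m * n)) : 'M[C]_(m, n) :=
  \matrix_(i, j) xi (idx i j) 0.

Lemma choi_stateE a a' b (xi : 'cV[C]_(a * a')) (J : 'M[C]_(a' * b)) :
  choi_state xi J =
  (ket_mx xi *t 1%:M) *m J *m (adjmx (ket_mx xi) *t 1%:M).
Proof.
apply/matrixP => k k'.
case: (mxtens_indexP k) => i y; case: (mxtens_indexP k') => i' y'.
rewrite tens1mx_mulmxE mxE !mxtens_indexK; apply: eq_bigr => j _.
rewrite mxE sum_mxtens_index.
under eq_bigr => i2 _ do rewrite sum_mxtens_index.
under eq_bigr => i2 _ do under eq_bigr => j2 _ do under eq_bigr => z _ do
  rewrite tensmxE [1%:M _ _]mxE castmxE /= !cast_mxtens_indexA tensmxE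
          ptransp2E ketbraE [1%:M _ _]mxE -mulrA.
rewrite exchange_big; apply: eq_bigr => j2 _ /=; rewrite exchange_big /=.
under eq_bigr => z _ do rewrite sum_delta_mull mulrA.
by rewrite sum_delta_mulr !mxE mulrCA mulrA.
Qed.

Definition tens_block m n (M : 'M[C]_(m * n)) i i' : 'M[C]_n :=
  \matrix_(x, z) M (idx i x) (idx i' z).

Lemma ptr2_tens_block m n (M : 'M[C]_(m * n)) i i' :
  ptr2 M i i' = \tr (tens_block M i i').
Proof. by rewrite mxE; apply: eq_bigr => y _; rewrite mxE. Qed.

Lemma tens_block_tens1mx_mulmx n m p (A : 'M[C]_(n, m)) (M : 'M[C]_(m * p))
    (B : 'M[C]_(m, n)) i i' :
  tens_block ((A *t 1%:M) *m M *m (B *t 1%:M)) i i' =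
  \sum_j \sum_j' (A i j * B j' i') *: tens_block M j j'.
Proof.
apply/matrixP => x z; rewrite mxE tens1mx_mulmxE summxE; apply: eq_bigr => j _.
by rewrite summxE; apply: eq_bigr => j' _; rewrite !mxE mulrAC.
Qed.

Lemma idtensE n b b' (L : 'M[C]_b -> 'M[C]_b') (M : 'M[C]_(n * b)) i y i' y' :
  idtens L M (idx i y) (idx i' y') = L (tens_block M i i') y y'.
Proof. by rewrite mxE !mxtens_indexK. Qed.

Lemma tens_block_idtens n b b' (L : 'M[C]_b -> 'M[C]_b') (M : 'M[C]_(n * b)) i i' :
  tens_block (idtens L M) i i' = L (tens_block M i i').
Proof. by apply/matrixP => x z; rewrite mxE idtensE. Qed.

Lemma ptr2_idtens n b b' (L : 'M[C]_b -> 'M[C]_b') (M : 'M[C]_(n * b)) :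
  (forall X, \tr (L X) = \tr X) -> ptr2 (idtens L M) = ptr2 M.
Proof.
by move=> trL; apply/matrixP => i i'; rewrite !ptr2_tens_block tens_block_idtens trL.
Qed.

Lemma mxtrace_mul_tens1mx m n (M : 'M[C]_(m * n)) (A : 'M[C]_m) :
  \tr (M *m (A *t 1%:M)) = \tr (ptr2 M *m A).
Proof.
rewrite /mxtrace sum_mxtens_index; apply: eq_bigr => i _.
under eq_bigr => y _ do rewrite mxE sum_mxtens_index.
rewrite exchange_big mxE; apply: eq_bigr => j _ /=.
rewrite mxE mulr_suml; apply: eq_bigr => y _.
by under eq_bigr => z _ do rewrite tensmxE [1%:M _ _]mxE mulrA; rewrite sum_delta_mulr.
Qed.

Lemma mxtrace_adj_ket_mx m n (xi : 'cV[C]_(m * n)) :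
  \tr (adjmx (ket_mx xi) *m ket_mx xi) = (adjmx xi *m xi) 0 0.
Proof.
rewrite mxtrace_mulC /mxtrace mxE sum_mxtens_index; apply: eq_bigr => i _.
by rewrite mxE; apply: eq_bigr => j _; rewrite !mxE mulrC.
Qed.

Lemma choi_state_trace a a' b (xi : 'cV[C]_(a * a')) (J : 'M[C]_(a' * b)) :
  unit_vec xi -> is_choi J -> \tr (choi_state xi J) = 1.
Proof.
move=> xi1 [_ trJ]; rewrite choi_stateE -mulmxA mxtrace_mulC -mulmxA.
by rewrite tensmx_mul mulmx1 mxtrace_mul_tens1mx trJ mul1mx mxtrace_adj_ket_mx.
Qed.

Lemma choi_state_psd a a' b (xi : 'cV[C]_(a * a')) (J : 'M[C]_(a' * b)) :
  psd J -> psd (choi_state xi J).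
Proof.
rewrite choi_stateE.
have -> : ket_mx xi *t 1%:M = adjmx (adjmx (ket_mx xi) *t 1%:M) :> 'M_(a * b, a' * b).
  by rewrite adjmx_tens adjmxK adjmx1.
exact: psd_congr.
Qed.

Lemma choi_state_is_state a a' b (xi : 'cV[C]_(a * a')) (J : 'M[C]_(a' * b)) :
  unit_vec xi -> is_choi J -> is_state (choi_state xi J).
Proof.
move=> xi1 choiJ; split; last exact: choi_state_trace.
by apply: choi_state_psd; case: choiJ.
Qed.

Lemma is_choi_idtens a' b b' (L : 'M[C]_b -> 'M[C]_b') (J : 'M[C]_(a' * b)) :
  cptp L -> is_choi J -> is_choi (idtens L J).
Proof. by case=> _ psdL trL [psdJ trJ]; split; [apply: psdL | rewrite ptr2_idtens]. Qed.

Section LinearIdtens.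
Variables (b b' : nat) (L : 'M[C]_b -> 'M[C]_b').
Hypothesis L_linear : linear L.
HB.instance Definition _ :=
  GRing.isLinear.Build C 'M[C]_b 'M[C]_b' *:%R L L_linear.

Lemma idtens_tens1mx_mulmx n m (A : 'M[C]_(n, m)) (M : 'M[C]_(m * b))
    (B : 'M[C]_(m, n)) :
  idtens L ((A *t 1%:M) *m M *m (B *t 1%:M)) =
  (A *t 1%:M) *m idtens L M *m (B *t 1%:M).
Proof.
apply/matrixP => k k'.
case: (mxtens_indexP k) => i y; case: (mxtens_indexP k') => i' y'.
rewrite idtensE tens_block_tens1mx_mulmx tens1mx_mulmxE.
rewrite linear_sum summxE; apply: eq_bigr => j _.
rewrite linear_sum summxE; apply: eq_bigr => j' _.
by rewrite linearZ mxE idtensE mulrAC.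
Qed.

Lemma choi_state_idtens a a' (xi : 'cV[C]_(a * a')) (J : 'M[C]_(a' * b)) :
  choi_state xi (idtens L J) = idtens L (choi_state xi J).
Proof. by rewrite !choi_stateE idtens_tens1mx_mulmx. Qed.

End LinearIdtens.

End ChoiState.

Theorem mainTheorem3
  (R : realType) (a a' b b' : nat) (C' : finType)
  (xig xit : 'cV[R[i]]_(a * a'))
  (W : 'M[R[i]]_(a * b) -> R)
  (P : C' -> 'M[R[i]]_(a * b))
  (gamma : R) (dA kappa : nat)
  (L : 'M[R[i]]_b -> 'M[R[i]]_b')
  (P' : C' -> 'M[R[i]]_(a * b'))
  (theta1 theta2 : R) (F : {set C'})
  (MA : 'M[R[i]]_a) (PiB : 'M[R[i]]_b) (PiB' : 'M[R[i]]_b')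
  (What : 'M[R[i]]_(a * b') -> R) :
  unit_vec xig -> unit_vec xit ->
  povm P ->
  0 < gamma <= 1 -> (1 <= dA)%N -> (kappa = 1 \/ kappa = 2)%N ->
  cptp L ->
  (* (a) *)
  povm P' ->
  (forall (rho : 'M[R[i]]_(a * b)), is_state rho ->
     forall c, Phi P' (idtens L rho) c = Phi P rho c) ->
  (* (b) *)
  povm_elem MA -> projector PiB -> projector PiB' ->
  (forall (rho : 'M[R[i]]_(a * b)), is_state rho ->
     \tr ((MA *t PiB') *m idtens L rho) = \tr ((MA *t PiB) *m rho)) ->
  (forall (rho : 'M[R[i]]_(a * b)), is_state rho ->
     \sum_(c in F) Phi P rho c >=
       theta1 * (theta2 - complex.Re (\tr ((MA *t PiB) *m rho)))) ->
  (* (c) *)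
  (forall J : 'M[R[i]]_(a' * b), is_choi J ->
     What (choi_state xig (idtens L J)) <= W (choi_state xig J)) ->
  forall (g q : C' -> R), prob_dist q ->
  forall alpha : R, 1 < alpha < 3 / 2 ->
  (ereal_inf
     [set ((What (choi_state xig J')
            + \sum_c g c * (q c - Phi P' (choi_state xit J') c)
            - c_alpha alpha
                * Vtilde gamma dA kappa (Phi P' (choi_state xit J')) g)%R%:E)
     | J' in [set J' : 'M[R[i]]_(a' * b') |
               is_choi J' /\
               (\sum_(c in F) Phi P' (choi_state xit J') c >=
                 theta1 * (theta2 - complex.Re
                    (\tr ((MA *t PiB') *m choi_state xit J'))))%R]]
   <=
   ereal_inf
     [set ((W (choi_state xig J)
            + \sum_c g c * (q c - Phi P (choi_state xit J) c)
            - c_alpha alpha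
                * Vtilde gamma dA kappa (Phi P (choi_state xit J)) g)%R%:E)
     | J in [set J : 'M[R[i]]_(a' * b) | is_choi J]])%E.
Proof.
move=> _ xit1 _ _ _ _ cptpL _ PhiL _ _ _ MPiL Fbound Wbound g q _ alpha _.
have linL : linear L by case: cptpL.
apply: le_ereal_inf_tmp => _ [J choiJ <-].
have stateJ := choi_state_is_state xit1 choiJ.
have PhiLJ : Phi P' (choi_state xit (idtens L J)) = Phi P (choi_state xit J).
  by apply/funext => c; rewrite (choi_state_idtens linL) PhiL.
apply: ge_ereal_inf; eexists; first exists (idtens L J).
- split; first exact: is_choi_idtens.
  by rewrite PhiLJ (choi_state_idtens linL) MPiL //; apply: Fbound.
- reflexivity.
- by rewrite PhiLJ lee_fin !lerD2r; apply: Wbound.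
Qed.
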